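(* In the planar algebra $\mathcal P$ described in the context, the traces are: $\mathrm{tr}(\emptyset)=1$, $\mathrm{tr}(P_1)=2$, $\mathrm{tr}(P_2)=3$, $\mathrm{tr}(P_3)=4$, $\mathrm{tr}(P_4)=3$, $\mathrm{tr}(P_5)=2$, $\mathrm{tr}(P_6)=1$, $\mathrm{tr}(Q_4)=2$.
   Context: $\mathcal P$ is the unshaded planar algebra generated by a self-adjoint $S\in\mathcal P_4$ modulo: (i) a closed loop equals $2$; (ii) $S$ is uncuppable, uncappable and unsidecappable (multiplying by any Temperley–Lieb cup/cap element $e_j$ on top or bottom gives 0, and its left and right partial traces vanish); (iii) $S^2=6f^{(4)}+S$; (iv) the jellyfish relation: the rainbowed $S$ (all 8 strands bent to the bottom over the right) with an extra strand passing above it equals the same with the extra strand passing below the box, crossing over its 8 strands, crossings defined by the Kauffman rule crossing $=i\cdot(\text{A-smoothing})-i\cdot(\text{B-smoothing})$. Jones–Wenzl projections: $f^{(1)}=X$ (single strand), $f^{(k+1)}=f^{(k)}\otimes X-\frac{k}{k+1}(f^{(k)}\otimes X)e_k(f^{(k)}\otimes X)$, where $e_k$ has a cap and cup at positions $k,k+1$. Define $P_1=X$, $P_2=f^{(2)}$, $P_3=f^{(3)}$, $P_4=\frac35f^{(4)}-\frac15S$, $Q_4=\frac25f^{(4)}+\frac15S$, $P_5=P_4\otimes X-\frac43(P_4\otimes X)e_4(P_4\otimes X)$, $P_6=P_5\otimes X-\frac32(P_5\otimes X)e_5(P_5\otimes X)$. $\mathrm{tr}$ is the (right) trace, closing up all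 strands. *)

(* An unshaded planar algebra with loop parameter is encoded (equivalently,
   by the standard correspondence planar algebras <-> strict pivotal
   categories generated by a symmetrically self-dual object) as a
   K-linear strict monoidal *-category whose objects are natural numbers
   (numbers of strands), with a self-dual generating strand given by
   cup/cap satisfying both zigzag relations, and pivotality
   (full rotation of any element of P_{0,n} is the identity).
   pahom m n = diagrams with m boundary points at the bottom and n at the top.
   P_n (2n boundary points) = pahom n n, with multiplication = vertical
   stacking (mcomp f g = f on top of g).
   CONVENTION: tens f g places f to the LEFT of g; for f : pahom m n,
   g : pahom p q, its type is written pahom (p + m) (q + n) (the count p+m is
   just m+p; the order of summands is chosen so that tensoring by a single
   strand on the right gives pahom m.+1 n.+1 definitionally). *)
From HB Require Import structures.
From mathcomp Require Import all_boot all_order all_algebra.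
Set Implicit Arguments. Unset Strict Implicit. Unset Printing Implicit Defensive.
Import Order.TTheory GRing.Theory Num.Theory.
Local Open Scope ring_scope.

Record paops (K : numClosedFieldType) := PAOps {
  pahom : nat -> nat -> lmodType K;
  mcomp : forall l m n, pahom m n -> pahom l m -> pahom l n;
  idm : forall n, pahom n n;
  tens : forall m n p q, pahom m n -> pahom p q -> pahom (p + m)%N (q + n)%N;
  cup : pahom 0 2;
  cap : pahom 2 0;
  dag : forall m n, pahom m n -> pahom n m }.

Arguments pahom {K} _ _ _.
Arguments mcomp {K _ _ _ _} _ _.
Arguments idm {K _} _.
Arguments tens {K _ _ _ _ _} _ _.
Arguments cup {K _}.
Arguments cap {K _}.
Arguments dag {K _ _ _} _.

Section Ops.
Variables (K : numClosedFieldType) (A : paops K).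

Definition hcast m m' n n' (Em : m = m') (En : n = n') (f : pahom A m n)
  : pahom A m' n' :=
  match Em in _ = a, En in _ = b return pahom A a b with
  | erefl, erefl => f end.

(* one-click rotation of an element of P_{0,n+1}: the leftmost boundary
   point is moved to the rightmost position *)
Definition rot n (x : pahom A 0 n.+1) : pahom A 0 n.+1 :=
  mcomp (hcast (addnS n.+1 1) (addn0 n.+1) (tens (@cap _ A) (idm n.+1)))
        (mcomp (tens (tens (idm 1) x) (idm 1)) cup).

Definition E2 : pahom A 2 2 := mcomp cup cap.

(* e-element: a strands, then cap/cup at the next two positions, then b
   strands; i.e. e_{a+1} on a+b+2 strands *)
Definition ee a b : pahom A (b + (2 + a)) (b + (2 + a)) :=
  tens (tens (idm a) E2) (idm b).

(* Jones-Wenzl: jw k = f^(k+1) *)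
Fixpoint jw k : pahom A k.+1 k.+1 :=
  match k return pahom A k.+1 k.+1 with
  | 0 => idm 1
  | j.+1 => let g := tens (jw j) (idm 1) in
            g - ((j.+1)%:R / (j.+2)%:R) *: mcomp g (mcomp (ee j 0) g)
  end.

(* f^(k), with f^(0) the empty diagram *)
Definition JW k : pahom A k k :=
  match k return pahom A k k with 0 => idm 0 | j.+1 => jw j end.

Definition rptr n (x : pahom A n.+1 n.+1) : pahom A n n :=
  mcomp (tens (idm n) cap) (mcomp (tens x (idm 1)) (tens (idm n) cup)).

Definition lptr4 (x : pahom A 4 4) : pahom A 3 3 :=
  mcomp (tens cap (idm 3)) (mcomp (tens (idm 1) x) (tens cup (idm 3))).

Fixpoint tr n : pahom A n n -> pahom A 0 0 :=
  match n return pahom A n n -> pahom A 0 0 with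
  | 0 => fun x => x
  | n'.+1 => fun x => tr (rptr x)
  end.

(* Kauffman crossing, overstrand from bottom-left to top-right:
   i*(A-smoothing) - i*(B-smoothing), A-smoothing = identity *)
Definition crossing : pahom A 2 2 := 'i *: idm 2 - 'i *: E2.

Definition sig a b : pahom A (b + (2 + a)) (b + (2 + a)) :=
  tens (tens (idm a) crossing) (idm b).

Definition rainbow_cap : pahom A 8 0 :=
  mcomp (mcomp (mcomp cap (tens (tens (idm 1) cap) (idm 1)))
               (tens (tens (idm 2) cap) (idm 2)))
        (tens (tens (idm 3) cap) (idm 3)).

(* rainbowed S: the 4 top strands bent down over the right *)
Definition rainbowed (S : pahom A 4 4) : pahom A 8 0 :=
  mcomp rainbow_cap (tens S (idm 4)).

(* extra strand (bottom positions 1 and 10) passing above the box *)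
Definition jelly_above (S : pahom A 4 4) : pahom A 10 0 :=
  mcomp cap (tens (tens (idm 1) (rainbowed S)) (idm 1)).

(* extra strand passing below the box, crossing over its 8 strands *)
Definition jelly_below (S : pahom A 4 4) : pahom A 10 0 :=
  mcomp (rainbowed S)
   (mcomp (tens (idm 8) cap)
    (mcomp (sig 7 1) (mcomp (sig 6 2) (mcomp (sig 5 3) (mcomp (sig 4 4)
    (mcomp (sig 3 5) (mcomp (sig 2 6) (mcomp (sig 1 7) (sig 0 8))))))))).

End Ops.

Arguments hcast {K A m m' n n'} Em En f.
Arguments rot {K A n} x.
Arguments E2 {K A}.
Arguments ee {K A} a b.
Arguments jw {K A} k.
Arguments JW {K A} k.
Arguments rptr {K A n} x.
Arguments lptr4 {K A} x.
Arguments tr {K A n} x.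

Record pa_axioms (K : numClosedFieldType) (A : paops K) : Prop := {
  mcompDl : forall l m n (a : K) (f g : pahom A m n) (h : pahom A l m),
    mcomp (a *: f + g) h = a *: mcomp f h + mcomp g h;
  mcompDr : forall l m n (a : K) (f : pahom A m n) (g h : pahom A l m),
    mcomp f (a *: g + h) = a *: mcomp f g + mcomp f h;
  mcompA : forall k l m n (f : pahom A m n) (g : pahom A l m) (h : pahom A k l),
    mcomp f (mcomp g h) = mcomp (mcomp f g) h;
  mcomp1l : forall m n (f : pahom A m n), mcomp (idm n) f = f;
  mcomp1r : forall m n (f : pahom A m n), mcomp f (idm m) = f;
  tensDl : forall m n p q (a : K) (f g : pahom A m n) (h : pahom A p q),
    tens (a *: f + g) h = a *: tens f h + tens g h;
  tensDr : forall m n p q (a : K) (f : pahom A m n) (g h : pahom A p q),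
    tens f (a *: g + h) = a *: tens f g + tens f h;
  tensA : forall m n p q r s (f : pahom A m n) (g : pahom A p q) (h : pahom A r s),
    tens (tens f g) h
    = hcast (esym (addnA r p m)) (esym (addnA s q n)) (tens f (tens g h));
  tens1r : forall m n (f : pahom A m n), tens f (idm 0) = f;
  tens1l : forall m n (f : pahom A m n),
    tens (idm 0) f = hcast (esym (addn0 m)) (esym (addn0 n)) f;
  tens_idm : forall m n, tens (@idm _ A m) (idm n) = idm (n + m);
  interchange : forall l m n l' m' n' (f : pahom A m n) (g : pahom A l m)
      (f' : pahom A m' n') (g' : pahom A l' m'),
    tens (mcomp f g) (mcomp f' g') = mcomp (tens f f') (tens g g');
  zigzag1 : mcomp (tens (@idm _ A 1) cap) (tens cup (idm 1)) = idm 1;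
  zigzag2 : mcomp (tens (@cap _ A) (idm 1)) (tens (idm 1) cup) = idm 1;
  pivotal : forall n (x : pahom A 0 n.+1), iter n.+1 rot x = x;
  dagD : forall m n (a : K) (f g : pahom A m n),
    dag (a *: f + g) = a^* *: dag f + dag g;
  dagK : forall m n (f : pahom A m n), dag (dag f) = f;
  dag_mcomp : forall l m n (f : pahom A m n) (g : pahom A l m),
    dag (mcomp f g) = mcomp (dag g) (dag f);
  dag_tens : forall m n p q (f : pahom A m n) (g : pahom A p q),
    dag (tens f g) = tens (dag f) (dag g);
  dag_cup : dag (@cup _ A) = cap }.

Record generator_relations (K : numClosedFieldType) (A : paops K)
    (S : pahom A 4 4) : Prop := {
  loop_value : mcomp (@cap _ A) cup = 2 *: idm 0;
  S_selfadjoint : dag S = S;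
  S_uncappable1 : mcomp (ee 0 2) S = 0;
  S_uncappable2 : mcomp (ee 1 1) S = 0;
  S_uncappable3 : mcomp (ee 2 0) S = 0;
  S_uncuppable1 : mcomp S (ee 0 2) = 0;
  S_uncuppable2 : mcomp S (ee 1 1) = 0;
  S_uncuppable3 : mcomp S (ee 2 0) = 0;
  S_right_ptrace : rptr S = 0;
  S_left_ptrace : lptr4 S = 0;
  S_square : mcomp S S = 6 *: JW 4 + S;
  S_jellyfish : jelly_above S = jelly_below S }.

Section Projections.
Variables (K : numClosedFieldType) (A : paops K) (S : pahom A 4 4).
Definition P1 : pahom A 1 1 := idm 1.
Definition P2 : pahom A 2 2 := JW 2.
Definition P3 : pahom A 3 3 := JW 3.
Definition P4 : pahom A 4 4 := (3 / 5) *: JW 4 - (1 / 5) *: S.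
Definition Q4 : pahom A 4 4 := (2 / 5) *: JW 4 + (1 / 5) *: S.
Definition P5 : pahom A 5 5 :=
  let g := tens P4 (idm 1) in g - (4 / 3) *: mcomp g (mcomp (ee 3 0) g).
Definition P6 : pahom A 6 6 :=
  let g := tens P5 (idm 1) in g - (3 / 2) *: mcomp g (mcomp (ee 4 0) g).
End Projections.

(* The computation rests on Wenzl's recursion.  Say that f in P_(n+1) is a
   Wenzl projection over p in P_n with ratio lam when f is idempotent,
   f (p (x) 1) = f and the right partial trace of f is lam p; then
   tr f = lam tr p.  If c lam = 1, then f (x) 1 - c (f (x) 1) e (f (x) 1) is a
   Wenzl projection over f with ratio 2 - c, because
   e (f (x) 1) e = (ptr f (x) 1 (x) 1) e.  Starting from a single strand this
   produces the Jones-Wenzl projections, with tr f^(k) = k + 1.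
   Since S is uncappable and uncuppable, f^(4) is a two-sided unit for S, so
   S^2 = 6 f^(4) + S makes P_4 idempotent; as S has zero partial trace, P_4 is
   a Wenzl projection over f^(3) with ratio 3/4, and P_5, P_6 continue the
   recursion with ratios 2/3 and 1/2.  Similarly ptr Q_4 = f^(3)/2. *)

From HB Require Import structures.
From mathcomp Require Import all_boot all_order all_algebra.
Import Order.TTheory GRing.Theory Num.Theory.
From mathcomp Require Import ring.
Set Implicit Arguments. Unset Strict Implicit. Unset Printing Implicit Defensive.
Local Open Scope ring_scope.

Lemma hcast_id (K : numClosedFieldType) (A : paops K) m n (Em : m = m) (En : n = n)
    (f : pahom A m n) :
  hcast Em En f = f.
Proof. by rewrite (eq_irrelevance Em erefl) (eq_irrelevance En erefl). Qed.

Section Linearity.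
Variables (K : numClosedFieldType) (A : paops K).
Hypothesis ax : pa_axioms A.

Definition mcomprL l m n (h : pahom A l m) : {linear pahom A m n -> pahom A l n} :=
  HB.pack (mcomp^~ h)
    (GRing.isLinear.Build K _ _ _ (mcomp^~ h) (fun a f g => mcompDl ax a f g h)).

Definition mcompL l m n (f : pahom A m n) : {linear pahom A l m -> pahom A l n} :=
  HB.pack (mcomp f)
    (GRing.isLinear.Build K _ _ _ (mcomp f) (fun a => mcompDr ax a f)).

Definition tensrL m n p q (h : pahom A p q) :
  {linear pahom A m n -> pahom A (p + m) (q + n)} :=
  HB.pack (tens^~ h)
    (GRing.isLinear.Build K _ _ _ (tens^~ h) (fun a f g => tensDl ax a f g h)).

Definition tensL m n p q (f : pahom A m n) :
  {linear pahom A p q -> pahom A (p + m) (q + n)} :=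
  HB.pack (tens f) (GRing.isLinear.Build K _ _ _ (tens f) (fun a => tensDr ax a f)).

Lemma rptr_is_linear n : linear (@rptr K A n).
Proof. by move=> a x y; rewrite /rptr (tensDl ax) (mcompDl ax) (mcompDr ax). Qed.

Definition rptrL n : {linear pahom A n.+1 n.+1 -> pahom A n n} :=
  HB.pack (@rptr K A n) (GRing.isLinear.Build K _ _ _ _ (@rptr_is_linear n)).

Section Laws.
Variables l m n : nat.
Implicit Types (f g : pahom A m n) (h k : pahom A l m) (a : K).

Lemma mcomp0l h : mcomp (0 : pahom A m n) h = 0. Proof. exact: linear0 (mcomprL n h). Qed.
Lemma mcomp0r f : mcomp f (0 : pahom A l m) = 0. Proof. exact: linear0 (mcompL l f). Qed.
Lemma mcompZl a f h : mcomp (a *: f) h = a *: mcomp f h.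
Proof. exact: linearZ_LR (mcomprL n h) a f. Qed.
Lemma mcompZr a f h : mcomp f (a *: h) = a *: mcomp f h.
Proof. exact: linearZ_LR (mcompL l f) a h. Qed.
Lemma mcomp_addl f g h : mcomp (f + g) h = mcomp f h + mcomp g h.
Proof. exact: linearD (mcomprL n h) f g. Qed.
Lemma mcomp_addr f h k : mcomp f (h + k) = mcomp f h + mcomp f k.
Proof. exact: linearD (mcompL l f) h k. Qed.
Lemma mcompBl f g h : mcomp (f - g) h = mcomp f h - mcomp g h.
Proof. exact: linearB (mcomprL n h) f g. Qed.
Lemma mcompBr f h k : mcomp f (h - k) = mcomp f h - mcomp f k.
Proof. exact: linearB (mcompL l f) h k. Qed.

End Laws.

Lemma tensZl m n p q a (f : pahom A m n) (h : pahom A p q) :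
  tens (a *: f) h = a *: tens f h.
Proof. exact: linearZ_LR (tensrL m n h) a f. Qed.
Lemma tensZr m n p q a (f : pahom A m n) (h : pahom A p q) :
  tens f (a *: h) = a *: tens f h.
Proof. exact: linearZ_LR (tensL p q f) a h. Qed.
Lemma tensBl m n p q (f g : pahom A m n) (h : pahom A p q) :
  tens (f - g) h = tens f h - tens g h.
Proof. exact: linearB (tensrL m n h) f g. Qed.

Lemma rptrZ n a (x : pahom A n.+1 n.+1) : rptr (a *: x) = a *: rptr x.
Proof. exact: linearZ_LR (rptrL n) a x. Qed.
Lemma rptrD n (x y : pahom A n.+1 n.+1) : rptr (x + y) = rptr x + rptr y.
Proof. exact: linearD (rptrL n) x y. Qed.
Lemma rptrB n (x y : pahom A n.+1 n.+1) : rptr (x - y) = rptr x - rptr y.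
Proof. exact: linearB (rptrL n) x y. Qed.

Lemma trS n (x : pahom A n.+1 n.+1) : tr x = tr (rptr x).
Proof. by []. Qed.

Lemma trZ n a (x : pahom A n n) : tr (a *: x) = a *: tr x.
Proof. by elim: n x => [|n IHn] x //=; rewrite rptrZ IHn. Qed.

End Linearity.

Section Idempotents.
Variables (K : numClosedFieldType) (A : paops K).
Hypothesis ax : pa_axioms A.

Lemma mcomp_idem_sub n (g q : pahom A n n) (c lam : K) :
  mcomp g g = g -> mcomp g q = q -> mcomp q g = q -> mcomp q q = lam *: q ->
  c * lam = 1 -> mcomp (g - c *: q) (g - c *: q) = g - c *: q.
Proof.
move=> gg gq qg qq clam.
rewrite mcompBl // !mcompBr // !mcompZl // !mcompZr // gg gq qg qq !scalerA.
by rewrite -mulrA clam mulr1 subrr subr0.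
Qed.

Definition unit_on n (g x : pahom A n n) := mcomp g x = x /\ mcomp x g = x.

Lemma unit_on_sub n (g e x : pahom A n n) (c : K) :
  unit_on g x -> mcomp e x = 0 -> mcomp x e = 0 ->
  unit_on (g - c *: mcomp g (mcomp e g)) x.
Proof.
move=> [gx xg] ex xe; split.
  by rewrite mcompBl // mcompZl // -!(mcompA ax) gx ex !mcomp0r // scaler0 subr0.
by rewrite mcompBr // mcompZr // !(mcompA ax) xg xe !mcomp0l // scaler0 subr0.
Qed.

Lemma mcomp_span_sq n (f x : pahom A n n) (s t a b : K) :
  mcomp f f = f -> unit_on f x -> mcomp x x = s *: f + t *: x ->
  mcomp (a *: f + b *: x) (a *: f + b *: x)
  = (a * a + s * (b * b)) *: f + (2 * (a * b) + t * (b * b)) *: x.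
Proof.
move=> ff [fx xf] xx.
rewrite mcomp_addl // !mcomp_addr // !mcompZl // !mcompZr // ff fx xf xx.
rewrite !scalerDr !scalerA (mulrC b a) (mulrC _ s) (mulrC _ t) mulr_natl mulr2n !scalerDl.
set u := (a * a) *: f; set v := (a * b) *: x.
set w := (s * (b * b)) *: f; set z := (t * (b * b)) *: x.
by rewrite [v + (w + z)]addrCA addrACA -[v + v + z]addrA.
Qed.

End Idempotents.

Section Diagrams.
Variables (K : numClosedFieldType) (A : paops K).
Hypothesis ax : pa_axioms A.

Definition incl n (f : pahom A n n) : pahom A n.+1 n.+1 := tens f (idm 1).

Lemma inclM n (f g : pahom A n n) : incl (mcomp f g) = mcomp (incl f) (incl g).
Proof.
rewrite /incl -{1}(mcomp1l ax (idm 1)).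
exact: (interchange ax f g (idm 1) (idm 1)).
Qed.

Lemma incl_idm n : incl (idm n) = idm n.+1 :> pahom A _ _.
Proof. exact: tens_idm ax n 1. Qed.

Lemma inclZ n a (f : pahom A n n) : incl (a *: f) = a *: incl f.
Proof. exact: (tensZl ax a f (idm 1)). Qed.

Lemma inclB n (f g : pahom A n n) : incl (f - g) = incl f - incl g.
Proof. exact: (tensBl ax f g (idm 1)). Qed.

Lemma incl_incl n (f : pahom A n n) : incl (incl f) = tens f (idm 2).
Proof. by have := tensA ax f (idm 1) (idm 1); rewrite (tens_idm ax) hcast_id. Qed.

Lemma incl_ee a b : incl (ee a b) = ee a b.+1 :> pahom A _ _.
Proof.
by have := tensA ax (tens (idm a) E2) (idm b) (idm 1); rewrite (tens_idm ax) hcast_id.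
Qed.

Lemma ee0 j : ee j 0 = tens (idm j) E2 :> pahom A _ _.
Proof. exact: tens1r. Qed.

Lemma mcomp_tens_idm j p q r (f : pahom A q r) (g : pahom A p q) :
  mcomp (tens (idm j) f) (tens (idm j) g) = tens (idm j) (mcomp f g).
Proof. by have := interchange ax (idm j) (idm j) f g; rewrite (mcomp1l ax) => ->. Qed.

Lemma cap_natural m n (f : pahom A m n) :
  mcomp (tens (idm n) cap) (tens f (idm 2)) = mcomp f (tens (idm m) cap).
Proof.
have := interchange ax (idm n) f cap (idm 2); rewrite (mcomp1l ax) (mcomp1r ax) => <-.
have := interchange ax f (idm m) (idm 0) cap; rewrite (mcomp1l ax) (mcomp1r ax).
by rewrite (tens1r ax).
Qed.

Lemma cup_natural m n (f : pahom A m n) :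
  mcomp (tens f (idm 2)) (tens (idm m) cup) = mcomp (tens (idm n) cup) f.
Proof.
have := interchange ax f (idm m) (idm 2) cup; rewrite (mcomp1l ax) (mcomp1r ax) => <-.
have := interchange ax (idm n) f cup (idm 0); rewrite (mcomp1l ax) (mcomp1r ax).
by rewrite (tens1r ax).
Qed.

Lemma rptr_incl_mcomp n (f g : pahom A n n) (x : pahom A n.+1 n.+1) :
  rptr (mcomp (incl f) (mcomp x (incl g))) = mcomp f (mcomp (rptr x) g).
Proof.
rewrite /rptr -/(incl (mcomp _ _)) !inclM !incl_incl.
by rewrite !(mcompA ax) cap_natural -!(mcompA ax) cup_natural.
Qed.

Lemma rptr_tens_idm j n (x : pahom A n.+1 n.+1) :
  rptr (tens (idm j) x) = tens (idm j) (rptr x).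
Proof.
have capA : tens (idm (n + j)) cap = tens (idm j) (tens (idm n) cap) :> pahom A _ _.
  by have := tensA ax (idm j) (idm n) cap; rewrite (tens_idm ax) hcast_id => ->.
have cupA : tens (idm (n + j)) cup = tens (idm j) (tens (idm n) cup) :> pahom A _ _.
  by have := tensA ax (idm j) (idm n) cup; rewrite (tens_idm ax) hcast_id => ->.
have xA : tens (tens (idm j) x) (idm 1) = tens (idm j) (tens x (idm 1)).
  by have := tensA ax (idm j) x (idm 1); rewrite hcast_id => ->.
by rewrite /rptr capA cupA xA -!mcomp_tens_idm.
Qed.

Lemma rptr_E2 : rptr E2 = idm 1 :> pahom A _ _.
Proof.
have E2_tens : tens E2 (idm 1) = mcomp (tens cup (idm 1)) (tens cap (idm 1)) :> pahom A 3 3.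
  by have := interchange ax (@cup _ A) cap (idm 1) (idm 1); rewrite (mcomp1l ax).
rewrite /rptr E2_tens !(mcompA ax) (zigzag1 ax) (mcomp1l ax); exact: zigzag2.
Qed.

Lemma rptr_ee j : rptr (ee j 0) = idm j.+1 :> pahom A _ _.
Proof. by rewrite ee0; have := rptr_tens_idm j E2; rewrite rptr_E2 (tens_idm ax). Qed.

Lemma ee_incl_ee j (f : pahom A j.+1 j.+1) :
  mcomp (ee j 0) (mcomp (incl f) (ee j 0)) = mcomp (incl (incl (rptr f))) (ee j 0).
Proof.
have ee_cup_cap : ee j 0 = mcomp (tens (idm j) cup) (tens (idm j) cap) :> pahom A _ _.
  by rewrite ee0 mcomp_tens_idm.
rewrite incl_incl ee_cup_cap.
transitivity (mcomp (mcomp (tens (idm j) cup) (rptr f)) (tens (idm j) cap)).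
  by rewrite /rptr !(mcompA ax).
by rewrite -cup_natural !(mcompA ax).
Qed.

End Diagrams.

Section Wenzl.
Variables (K : numClosedFieldType) (A : paops K).
Hypotheses (ax : pa_axioms A) (loop2 : mcomp (@cap _ A) cup = 2 *: idm 0).

Lemma rptr_incl n (f : pahom A n n) : rptr (incl f) = 2 *: f.
Proof.
have capcup : mcomp (tens (idm n) cap) (tens (idm n) cup) = 2 *: idm n :> pahom A _ _.
  by rewrite mcomp_tens_idm // loop2 (tensZr ax) (tens_idm ax).
rewrite /rptr -/(incl (incl f)) incl_incl // cup_natural // (mcompA ax) capcup.
by rewrite mcompZl // (mcomp1l ax).
Qed.

(* [jw k.+1], [P5 S] and [P6 S] are convertible to instances of [wenzl]. *)
Definition wenzl j (f : pahom A j.+1 j.+1) (c : K) : pahom A j.+2 j.+2 :=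
  incl f - c *: mcomp (incl f) (mcomp (ee j 0) (incl f)).

Definition wenzl_proj n (f : pahom A n.+1 n.+1) (p : pahom A n n) (lam : K) :=
  [/\ mcomp f f = f, mcomp f (incl p) = f & rptr f = lam *: p].

Lemma wenzl_projS j (f : pahom A j.+1 j.+1) (p : pahom A j j) (lam c : K) :
  wenzl_proj f p lam -> c * lam = 1 -> wenzl_proj (wenzl f c) f (2 - c).
Proof.
move=> [ff fp rf] clam; set g := incl f; set e := @ee K A j 0.
set q := mcomp g (mcomp e g).
have gg : mcomp g g = g by rewrite -inclM // ff.
have gq : mcomp g q = q by rewrite /q (mcompA ax) gg.
have qg : mcomp q g = q by rewrite /q -!(mcompA ax) gg.
have qq : mcomp q q = lam *: q.
  have ggX l (X : pahom A l _) : mcomp g (mcomp g X) = mcomp g X.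
    by rewrite (mcompA ax) gg.
  have egeX l (X : pahom A l _) :
      mcomp e (mcomp g (mcomp e X)) = lam *: mcomp (incl (incl p)) (mcomp e X).
    rewrite (mcompA ax) (mcompA ax) -(mcompA ax e) ee_incl_ee // rf !inclZ //.
    by rewrite -mcompZl // (mcompA ax).
  by rewrite /q -!(mcompA ax) ggX egeX mcompZr // (mcompA ax g) -inclM // fp.
rewrite /wenzl_proj /wenzl -/g -/e -/q; split.
- exact: (mcomp_idem_sub ax) gg gq qg qq clam.
- by rewrite mcompBl // mcompZl // gg qg.
- rewrite rptrB // rptrZ // rptr_incl rptr_incl_mcomp // rptr_ee //.
  by rewrite (mcomp1l ax) ff scalerBl.
Qed.

Lemma jw_wenzl_proj k :
  wenzl_proj (jw k) (JW k) ((k.+2)%:R / (k.+1)%:R).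
Proof.
elim: k => [|k IHk].
  rewrite divr1; split; rewrite /= ?(mcomp1l ax) ?(incl_idm ax) //.
  by rewrite -[idm 1](incl_idm ax) rptr_incl.
have -> : (k.+3)%:R / (k.+2)%:R = 2 - (k.+1)%:R / (k.+2)%:R :> K.
  by field; rewrite -natrD pnatr_eq0.
apply: (wenzl_projS (c := (k.+1)%:R / (k.+2)%:R) IHk).
by field; rewrite nat1r -natrD !pnatr_eq0.
Qed.

Lemma tr_rptr n (x : pahom A n.+1 n.+1) (p : pahom A n n) (lam : K) :
  rptr x = lam *: p -> tr x = lam *: tr p.
Proof. by move=> rx; rewrite trS rx trZ. Qed.

Lemma tr_JW k : tr (JW k) = (k.+1)%:R *: idm 0 :> pahom A 0 0.
Proof.
elim: k => [|k IHk]; first by rewrite scale1r.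
have [_ _ /tr_rptr ->] := jw_wenzl_proj k.
by rewrite IHk scalerA mulfVK // pnatr_eq0.
Qed.

End Wenzl.

Section Generator.
Variables (K : numClosedFieldType) (A : paops K).
Hypothesis ax : pa_axioms A.
Variable S : pahom A 4 4.
Hypothesis gr : generator_relations S.

Lemma S_unit_on_jw : unit_on (incl (jw 2)) S /\ unit_on (jw 3) S.
Proof.
have u4 : unit_on (idm 4) S by split; rewrite ?(mcomp1l ax) ?(mcomp1r ax).
have u1 : unit_on (incl (incl (jw 1))) S.
  rewrite [jw 1]/(wenzl _ _) !inclB // !inclZ // !inclM //.
  rewrite (incl_ee ax 0 0) (incl_ee ax 0 1) !(incl_idm ax).
  by apply: (unit_on_sub ax); [ | exact: S_uncappable1 gr | exact: S_uncuppable1 gr].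
have u2 : unit_on (incl (jw 2)) S.
  rewrite [jw 2]/(wenzl _ _) inclB // inclZ // !inclM // (incl_ee ax 1 0).
  by apply: (unit_on_sub ax); [ | exact: S_uncappable2 gr | exact: S_uncuppable2 gr].
split => //; rewrite [jw 3]/(wenzl _ _).
by apply: (unit_on_sub ax); [ | exact: S_uncappable3 gr | exact: S_uncuppable3 gr].
Qed.

Lemma P4_wenzl_proj : wenzl_proj (P4 S) (jw 2) (3 / 4).
Proof.
have [u2 [jw3S Sjw3]] := S_unit_on_jw.
have [jj jp rj] := jw_wenzl_proj ax (loop_value gr) 3.
have SS : mcomp S S = 6 *: jw 3 + 1 *: S by rewrite scale1r (S_square gr).
split.
- rewrite /P4 -scaleNr (mcomp_span_sq ax _ _ jj (conj jw3S Sjw3) SS).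
  by congr (_ *: _ + _ *: _); field.
- by rewrite /P4 mcompBl // !mcompZl // jp u2.2.
- rewrite /P4 rptrB // !rptrZ // rj (S_right_ptrace gr) scaler0 subr0 scalerA.
  by congr (_ *: _); field.
Qed.

Lemma P5_wenzl_proj : wenzl_proj (P5 S) (P4 S) (2 / 3).
Proof.
have -> : 2 / 3 = 2 - 4 / 3 :> K by field.
by apply: (wenzl_projS ax (loop_value gr) P4_wenzl_proj); field.
Qed.

Lemma P6_wenzl_proj : wenzl_proj (P6 S) (P5 S) (1 / 2).
Proof.
have -> : 1 / 2 = 2 - 3 / 2 :> K by field.
by apply: (wenzl_projS ax (loop_value gr) P5_wenzl_proj); field.
Qed.

Lemma tr_P4 : tr (P4 S) = 3 *: idm 0.
Proof.
have [_ _ /(tr_rptr ax) ->] := P4_wenzl_proj.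
by rewrite (tr_JW ax (loop_value gr) 3) scalerA; congr (_ *: _); field.
Qed.

Lemma tr_P5 : tr (P5 S) = 2 *: idm 0.
Proof.
have [_ _ /(tr_rptr ax) ->] := P5_wenzl_proj.
by rewrite tr_P4 scalerA; congr (_ *: _); field.
Qed.

Lemma tr_P6 : tr (P6 S) = 1 *: idm 0.
Proof.
have [_ _ /(tr_rptr ax) ->] := P6_wenzl_proj.
by rewrite tr_P5 scalerA; congr (_ *: _); field.
Qed.

Lemma tr_Q4 : tr (Q4 S) = 2 *: idm 0.
Proof.
have [_ _ rj] := jw_wenzl_proj ax (loop_value gr) 3.
rewrite (tr_rptr ax (p := jw 2) (lam := 1 / 2)).
  by rewrite (tr_JW ax (loop_value gr) 3) scalerA; congr (_ *: _); field.
rewrite /Q4 rptrD // !rptrZ // rj (S_right_ptrace gr) scaler0 addr0 scalerA.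
by congr (_ *: _); field.
Qed.

End Generator.

Theorem lemma4p7 (K : numClosedFieldType) (A : paops K) (S : pahom A 4 4) :
  pa_axioms A -> generator_relations S ->
  tr (idm 0 : pahom A 0 0) = 1 *: idm 0 /\
  tr (@P1 _ A) = 2 *: idm 0 /\
  tr (@P2 _ A) = 3 *: idm 0 /\
  tr (@P3 _ A) = 4 *: idm 0 /\
  tr (P4 S) = 3 *: idm 0 /\
  tr (P5 S) = 2 *: idm 0 /\
  tr (P6 S) = 1 *: idm 0 /\
  tr (Q4 S) = 2 *: idm 0.
Proof.
move=> ax gr; have trJW := tr_JW ax (loop_value gr).
split; first exact: trJW 0.
split; first exact: trJW 1.
split; first exact: trJW 2.
split; first exact: trJW 3.
split; first exact: tr_P4.
split; first exact: tr_P5.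
split; first exact: tr_P6.
exact: tr_Q4.
Qed.
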